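(* Let $R$ be a de Groot continuum with two distinct points $b_1,b_2$. Let $Y=(\mathbb{Z}\times R)/\sigma$, where $\mathbb{Z}$ is discrete and $\sigma$ is the equivalence relation whose only nontrivial identifications are $(k,b_2)\sim(k+1,b_1)$ for all $k\in\mathbb{Z}$. Then $Y$ is a connected locally compact space whose homeomorphism group $\mathcal{H}(Y)$ is isomorphic to the infinite cyclic group $\mathbb{Z}$; the isomorphism is given by letting $m\in\mathbb{Z}$ act via $\sigma(k,x)\mapsto\sigma(m+k,x)$.
   Context: A de Groot continuum (rigid continuum) is a compact connected metric space $R$ with more than one point such that every continuous map $R\to R$ is either the identity map or a constant map. $\mathcal{H}(Y)$ denotes the group of all homeomorphisms of a space $Y$ onto itself. The space $Y$ is the realisation of the directed chain $\mathbb{Z}$ (Cayley graph of $(\mathbb{Z},\{1\})$) obtained by inserting a copy of $R$ into each edge $k\to k+1$. *)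

From Stdlib Require Import Reals ZArith List Relations.
Open Scope R_scope.

Definition set (T : Type) := T -> Prop.

Definition continuous {S T : Type} (oS : set S -> Prop) (oT : set T -> Prop)
  (f : S -> T) : Prop :=
  forall V : set T, oT V -> oS (fun x => V (f x)).

Definition homeomorphism {T : Type} (oT : set T -> Prop) (h : T -> T) : Prop :=
  exists g : T -> T,
    (forall y, g (h y) = y) /\ (forall y, h (g y) = y) /\
    continuous oT oT h /\ continuous oT oT g.

Definition compact_set {T : Type} (oT : set T -> Prop) (K : set T) : Prop :=
  forall (I : Type) (U : I -> set T),
    (forall i, oT (U i)) ->
    (forall x, K x -> exists i, U i x) ->
    exists l : list I, forall x, K x -> exists i, In i l /\ U i x.

Definition connected_space {T : Type} (oT : set T -> Prop) : Prop :=
  forall U V : set T, oT U -> oT V ->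
    (forall x, U x \/ V x) -> (forall x, ~ (U x /\ V x)) ->
    (forall x, ~ U x) \/ (forall x, ~ V x).

Definition locally_compact {T : Type} (oT : set T -> Prop) : Prop :=
  forall x : T, exists (U K : set T),
    oT U /\ U x /\ (forall y, U y -> K y) /\ compact_set oT K.

Definition is_metric {X : Type} (d : X -> X -> R) : Prop :=
  (forall x y, 0 <= d x y) /\
  (forall x y, d x y = 0 <-> x = y) /\
  (forall x y, d x y = d y x) /\
  (forall x y z, d x z <= d x y + d y z).

Definition metric_open {X : Type} (d : X -> X -> R) (U : set X) : Prop :=
  forall x, U x -> exists eps, 0 < eps /\ forall y, d x y < eps -> U y.

Definition deGroot_continuum {X : Type} (d : X -> X -> R) : Prop :=
  is_metric d /\
  compact_set (metric_open d) (fun _ => True) /\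
  connected_space (metric_open d) /\
  (exists x y : X, x <> y) /\
  (forall f : X -> X, continuous (metric_open d) (metric_open d) f ->
     (forall x, f x = x) \/ (exists c, forall x, f x = c)).

(* Product topology on Z x X, with Z discrete. *)
Definition prod_open {X : Type} (d : X -> X -> R) (W : set (Z * X)) : Prop :=
  forall k : Z, metric_open d (fun x => W (k, x)).

Definition sigma_gen {X : Type} (b1 b2 : X) (a c : Z * X) : Prop :=
  exists k : Z, a = (k, b2) /\ c = ((k + 1)%Z, b1).

Definition sigma {X : Type} (b1 b2 : X) : relation (Z * X) :=
  clos_refl_sym_trans (Z * X) (sigma_gen b1 b2).

(* The quotient Y = (Z x X)/sigma, as the type of sigma-classes. *)
Definition Yq {X : Type} (b1 b2 : X) : Type :=
  { P : set (Z * X) | exists a, forall c, P c <-> sigma b1 b2 a c }.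

Definition qmap {X : Type} (b1 b2 : X) (a : Z * X) : Yq b1 b2 :=
  exist _ (sigma b1 b2 a) (ex_intro _ a (fun c => conj (fun h => h) (fun h => h))).

Definition Y_open {X : Type} (d : X -> X -> R) (b1 b2 : X) (V : set (Yq b1 b2)) : Prop :=
  prod_open d (fun a => V (qmap b1 b2 a)).

From Pilot Require Import Defs.
From Stdlib Require Import Reals ZArith List Relations Lia Lra.
From Stdlib Require Import Classical ClassicalEpsilon FunctionalExtensionality
  PropExtensionality ProofIrrelevance.

(* The space Y is the chain of copies R_k = {k} x R glued end to end, the end
   b2 of R_k being identified with the start b1 of R_(k+1).

   Points of Y have unique canonical representatives (i, w) with w <> b2, and
   for every j there is a continuous retraction r_j : Y -> R collapsing the
   edges before R_j to b1 and the edges after it to b2; the r_j separate the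
   points of Y.  From this:
   - Y is connected, because each edge R_k lies on one side of a separation
     and consecutive edges share a point;
   - Y is locally compact, because the union of the three edges around a
     point is compact and contains an open neighbourhood of it;
   - the shifts sigma(k, x) |-> sigma(m + k, x) form a faithful action of Z.
   For a homeomorphism h and an edge R_k, every map r_j o h o (x |-> (k, x))
   is the identity or constant by rigidity of R; they cannot all be constant
   as h is injective, so h maps R_k identically onto some edge R_(s k).
   Since the edges are glued in order, s is increasing, and so is the index
   map of the inverse homeomorphism; hence s is a translation k |-> k + m and
   h is the shift by m. *)

Lemma Z_step_invariant (P : Z -> Prop) :
  (forall k, P k <-> P (k + 1)%Z) -> forall k, P k <-> P 0%Z.
Proof.
  intros Hstep k; induction k using Z.peano_ind.
  - reflexivity.
  - rewrite <- IHk, (Hstep k), Z.add_1_r. reflexivity.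
  - rewrite <- IHk, (Hstep (Z.pred k)), Z.add_1_r, Z.succ_pred. reflexivity.
Qed.

Lemma Z_increasing (s : Z -> Z) :
  (forall k, (s k < s (k + 1))%Z) -> forall a b, (a < b)%Z -> (s a < s b)%Z.
Proof.
  intros Hs a b Hab.
  replace b with (a + Z.of_nat (S (Z.to_nat (b - a - 1))))%Z by lia.
  induction (Z.to_nat (b - a - 1)) as [|n IH].
  - apply Hs.
  - specialize (Hs (a + Z.of_nat (S n))%Z).
    replace (a + Z.of_nat (S (S n)))%Z with (a + Z.of_nat (S n) + 1)%Z by lia. lia.
Qed.

Lemma Z_increasing_retraction_translation (s t : Z -> Z) :
  (forall k, (s k < s (k + 1))%Z) -> (forall k, (t k < t (k + 1))%Z) ->
  (forall k, t (s k) = k) -> forall k, s k = (k + s 0%Z)%Z.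
Proof.
  intros Hs Ht Hts.
  assert (Hstep : forall k, s (k + 1)%Z = (s k + 1)%Z).
  { (* a value strictly between s k and s (k+1) would be sent by t strictly
       between k and k + 1 *)
    intro k. specialize (Hs k).
    destruct (Z.eq_dec (s (k + 1)%Z) (s k + 1)%Z) as [E|NE]; [exact E|].
    assert (Below := Z_increasing t Ht (s k) (s k + 1)%Z ltac:(lia)).
    assert (Above := Z_increasing t Ht (s k + 1)%Z (s (k + 1)%Z) ltac:(lia)).
    rewrite Hts in Below, Above. lia. }
  intro k. apply (Z_step_invariant (fun k => s k = (k + s 0%Z)%Z)); [|reflexivity].
  intro n. rewrite Hstep. lia.
Qed.

Section Quotient.
Context {X : Type} (b1 b2 : X).
Local Notation q := (qmap b1 b2).

Lemma sigma_glue (k : Z) : Defs.sigma b1 b2 (k, b2) ((k + 1)%Z, b1).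
Proof. apply rst_step. now exists k. Qed.

Lemma sigma_respect {A : Type} (f : Z * X -> A) :
  (forall k, f (k, b2) = f ((k + 1)%Z, b1)) ->
  forall a c, Defs.sigma b1 b2 a c -> f a = f c.
Proof.
  intros Hf a c Hac. induction Hac as [a c [k [-> ->]]| | |]; congruence.
Qed.

Lemma qmap_eq_iff (a c : Z * X) : q a = q c <-> Defs.sigma b1 b2 a c.
Proof.
  split.
  - intro E. apply (f_equal (@proj1_sig _ _)) in E. simpl in E.
    rewrite E. apply rst_refl.
  - intro Hac. unfold qmap. apply eq_sig_hprop; [intros; apply proof_irrelevance|].
    simpl. extensionality e. apply propositional_extensionality.
    split; intro H; eapply rst_trans; eauto using rst_sym.
Qed.

Lemma qmap_glue (k : Z) : q (k, b2) = q ((k + 1)%Z, b1).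
Proof. apply qmap_eq_iff, sigma_glue. Qed.

Lemma qmap_surj (y : Yq b1 b2) : exists a, q a = y.
Proof.
  destruct y as [P [a Ha]]. exists a. unfold qmap.
  apply eq_sig_hprop; [intros; apply proof_irrelevance|].
  simpl. extensionality c. apply propositional_extensionality. symmetry. apply Ha.
Qed.

Definition lift {A : Type} (f : Z * X -> A) (y : Yq b1 b2) : A :=
  f (proj1_sig (constructive_indefinite_description _ (qmap_surj y))).

Lemma lift_qmap {A : Type} (f : Z * X -> A) :
  (forall k, f (k, b2) = f ((k + 1)%Z, b1)) -> forall a, lift f (q a) = f a.
Proof.
  intros Hf a. unfold lift.
  destruct (constructive_indefinite_description _ _) as [c Hc]. simpl.
  apply (sigma_respect f Hf), qmap_eq_iff, Hc.
Qed.

Definition edge_coord (j : Z) (a : Z * X) : X :=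
  if Z_lt_dec (fst a) j then b1 else if Z.eq_dec (fst a) j then snd a else b2.

Definition retract (j : Z) : Yq b1 b2 -> X := lift (edge_coord j).

Lemma retract_qmap (j : Z) (a : Z * X) : retract j (q a) = edge_coord j a.
Proof.
  apply lift_qmap. intro k. unfold edge_coord; simpl.
  destruct (Z_lt_dec k j), (Z_lt_dec (k + 1) j), (Z.eq_dec k j), (Z.eq_dec (k + 1) j);
    reflexivity || lia.
Qed.

Definition shift (m : Z) : Yq b1 b2 -> Yq b1 b2 :=
  lift (fun a => q ((m + fst a)%Z, snd a)).

Lemma shift_qmap (m k : Z) (x : X) : shift m (q (k, x)) = q ((m + k)%Z, x).
Proof.
  unfold shift. rewrite lift_qmap; [reflexivity|].
  intro n. simpl. rewrite qmap_glue. f_equal. f_equal. lia.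
Qed.

Lemma shift_add (m n : Z) (y : Yq b1 b2) : shift (m + n) y = shift m (shift n y).
Proof.
  destruct (qmap_surj y) as [[k x] <-]. rewrite !shift_qmap. f_equal. f_equal. lia.
Qed.

Lemma shift_zero (y : Yq b1 b2) : shift 0 y = y.
Proof. destruct (qmap_surj y) as [[k x] <-]. now rewrite shift_qmap. Qed.

Hypothesis b1_neq_b2 : b1 <> b2.

Lemma canonical_form (y : Yq b1 b2) : exists i w, w <> b2 /\ y = q (i, w).
Proof.
  destruct (qmap_surj y) as [[k x] <-].
  destruct (classic (x = b2)) as [->|Hx].
  - exists (k + 1)%Z, b1. split; [exact b1_neq_b2|apply qmap_glue].
  - now exists k, x.
Qed.

Lemma canonical_form_unique (i i' : Z) (w w' : X) : w <> b2 -> w' <> b2 ->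
  q (i, w) = q (i', w') -> i = i' /\ w = w'.
Proof.
  (* normalising the b2-end of each edge to the b1-end of the next one is
     constant on sigma-classes and fixes canonical representatives *)
  set (normal := fun a : Z * X =>
    if excluded_middle_informative (snd a = b2) then ((fst a + 1)%Z, b1) else a).
  intros Hw Hw' E. apply qmap_eq_iff in E.
  apply (sigma_respect normal) in E.
  - unfold normal in E; simpl in E.
    destruct (excluded_middle_informative (w = b2)); [contradiction|].
    destruct (excluded_middle_informative (w' = b2)); [contradiction|].
    now injection E.
  - intro k. unfold normal; simpl.
    destruct (excluded_middle_informative (b2 = b2)); [|contradiction].
    destruct (excluded_middle_informative (b1 = b2)); [contradiction|reflexivity].
Qed.

Lemma retract_below (j k : Z) (x : X) : (k < j)%Z -> retract j (q (k, x)) = b1.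
Proof.
  intro H. rewrite retract_qmap. unfold edge_coord; simpl.
  destruct (Z_lt_dec k j); [reflexivity|lia].
Qed.

Lemma retract_above (j k : Z) (x : X) : (j < k)%Z -> retract j (q (k, x)) = b2.
Proof.
  intro H. rewrite retract_qmap. unfold edge_coord; simpl.
  destruct (Z_lt_dec k j), (Z.eq_dec k j); reflexivity || lia.
Qed.

Lemma retract_at (j : Z) (x : X) : retract j (q (j, x)) = x.
Proof.
  rewrite retract_qmap. unfold edge_coord; simpl.
  destruct (Z_lt_dec j j), (Z.eq_dec j j); reflexivity || lia.
Qed.

Lemma retract_canonical_cases (i j : Z) (w : X) : w <> b2 ->
  (i < j /\ retract j (q (i, w)) = b1)%Z \/ (i = j /\ retract j (q (i, w)) = w) \/
  (j < i /\ retract j (q (i, w)) = b2)%Z.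
Proof.
  intro Hw. destruct (Z.lt_trichotomy i j) as [H|[->|H]].
  - left. split; [exact H|now apply retract_below].
  - right; left. split; [reflexivity|apply retract_at].
  - right; right. split; [exact H|now apply retract_above].
Qed.

Lemma retractions_separate (y y' : Yq b1 b2) :
  (forall j, retract j y = retract j y') -> y = y'.
Proof.
  intro H.
  destruct (canonical_form y) as [i [w [Hw ->]]].
  destruct (canonical_form y') as [i' [w' [Hw' ->]]].
  assert (Hi := H i). assert (Hi' := H i'). rewrite retract_at in Hi, Hi'.
  destruct (retract_canonical_cases i' i w' Hw') as [[Hlt E]|[[-> E]|[_ E]]];
    rewrite E in Hi.
  - (* for i' < i, the retraction r_(i') would force w' = b2 *)
    destruct (retract_canonical_cases i i' w Hw) as [[Hlt' _]|[[Heq _]|[_ E']]]; try lia.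
    rewrite E' in Hi'. now destruct Hw'.
  - now rewrite Hi.
  - now destruct Hw.
Qed.

Lemma shift_injective (m n : Z) : (forall y, shift m y = shift n y) -> m = n.
Proof.
  intro H. specialize (H (q (0%Z, b1))). rewrite !shift_qmap in H.
  apply canonical_form_unique in H; [lia|exact b1_neq_b2|exact b1_neq_b2].
Qed.

End Quotient.

Lemma continuous_comp {A B C : Type} (oA : set A -> Prop) (oB : set B -> Prop)
  (oC : set C -> Prop) (f : A -> B) (g : B -> C) :
  continuous oA oB f -> continuous oB oC g -> continuous oA oC (fun x => g (f x)).
Proof. intros Hf Hg V HV. exact (Hf _ (Hg V HV)). Qed.

Section MetricOpen.
Context {X : Type} (d : X -> X -> R).

Lemma open_ext (A B : set X) :
  (forall x, A x <-> B x) -> metric_open d A -> metric_open d B.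
Proof.
  intros H HA x Bx. destruct (HA x (proj2 (H x) Bx)) as [e [He Hball]].
  exists e. split; [exact He|]. intros y Hy. apply H, Hball, Hy.
Qed.

Lemma open_const (P : Prop) : metric_open d (fun _ => P).
Proof. intros x Hx. exists 1. split; [lra|auto]. Qed.

Lemma open_and (A B : set X) :
  metric_open d A -> metric_open d B -> metric_open d (fun x => A x /\ B x).
Proof.
  intros HA HB x [Ax Bx].
  destruct (HA x Ax) as [e1 [He1 H1]], (HB x Bx) as [e2 [He2 H2]].
  exists (Rmin e1 e2). split; [now apply Rmin_glb_lt|].
  intros y Hy. split.
  - apply H1. eapply Rlt_le_trans; [exact Hy|apply Rmin_l].
  - apply H2. eapply Rlt_le_trans; [exact Hy|apply Rmin_r].
Qed.

Lemma open_neq (b : X) : is_metric d -> metric_open d (fun z => z <> b).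
Proof.
  intros [Hpos [Hzero _]] x Hx. exists (d x b). split.
  - destruct (Hpos x b) as [H|H]; [exact H|]. exfalso. now apply Hx, Hzero.
  - intros y Hy ->. lra.
Qed.

(* A connected metric space with two distinct points has a third one: otherwise
   both points would be open, separating the space. *)
Lemma connected_third_point (b1 b2 : X) :
  is_metric d -> connected_space (metric_open d) -> b1 <> b2 ->
  exists p, p <> b1 /\ p <> b2.
Proof.
  intros Hm Hc Hb. apply NNPP. intro Hnone.
  assert (Htwo : forall x, x = b1 \/ x = b2).
  { intro x. apply NNPP. intro H. apply Hnone. exists x. tauto. }
  assert (Hpoint : forall b b', b <> b' -> (forall x, x = b \/ x = b') ->
    metric_open d (fun x => x = b)).
  { intros b b' Hbb' Hall. apply (open_ext (fun x => x <> b')); [|now apply open_neq].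
    intro x. destruct (Hall x); split; intro; subst; congruence. }
  destruct (Hc (fun x => x = b1) (fun x => x = b2)) as [H|H].
  - exact (Hpoint b1 b2 Hb Htwo).
  - apply (Hpoint b2 b1 (not_eq_sym Hb)). intro x. destruct (Htwo x); tauto.
  - exact Htwo.
  - intros x [-> E]. exact (Hb E).
  - exact (H b1 eq_refl).
  - exact (H b2 eq_refl).
Qed.

End MetricOpen.

Section QuotientTopology.
Context {X : Type} (d : X -> X -> R) (b1 b2 : X).
Local Notation q := (qmap b1 b2).
Local Notation Y_open := (Y_open d b1 b2).

Lemma edge_continuous (k : Z) : continuous (metric_open d) Y_open (fun x => q (k, x)).
Proof. intros V HV. exact (HV k). Qed.

(* r_j is continuous: on each edge it is constant or the identity. *)
Lemma retract_continuous (j : Z) : continuous Y_open (metric_open d) (retract b1 b2 j).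
Proof.
  intros V HV k. apply (open_ext d (fun x => V (edge_coord b1 b2 j (k, x)))).
  { intro x. now rewrite retract_qmap. }
  unfold edge_coord; simpl.
  destruct (Z_lt_dec k j); [apply open_const|].
  destruct (Z.eq_dec k j); [exact HV|apply open_const].
Qed.

Lemma shift_continuous (m : Z) : continuous Y_open Y_open (shift b1 b2 m).
Proof.
  intros V HV k. apply (open_ext d (fun x => V (q ((m + k)%Z, x)))).
  - intro x. now rewrite shift_qmap.
  - exact (HV (m + k)%Z).
Qed.

Lemma shift_homeomorphism (m : Z) : homeomorphism Y_open (shift b1 b2 m).
Proof.
  exists (shift b1 b2 (- m)). repeat split; try apply shift_continuous.
  - intro y. now rewrite <- shift_add, Z.add_opp_diag_l, shift_zero.
  - intro y. now rewrite <- shift_add, Z.add_opp_diag_r, shift_zero.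
Qed.

(* Y is connected: each edge lies on one side of a separation, and
   consecutive edges share the point q (k, b2) = q (k + 1, b1). *)
Lemma Y_connected : connected_space (metric_open d) -> connected_space Y_open.
Proof.
  intros X_connected U V HU HV Hcover Hdisj.
  assert (Hedge : forall k, (forall x, U (q (k, x))) \/ (forall x, V (q (k, x)))).
  { intro k.
    destruct (X_connected (fun x => U (q (k, x))) (fun x => V (q (k, x))) (HU k) (HV k)
      (fun x => Hcover _) (fun x => Hdisj _)) as [NU|NV].
    - right. intro x. destruct (Hcover (q (k, x))); [exfalso; now apply (NU x)|assumption].
    - left. intro x. destruct (Hcover (q (k, x))); [assumption|exfalso; now apply (NV x)]. }
  set (inU := fun k => forall x, U (q (k, x))).
  assert (Hstep : forall k, inU k <-> inU (k + 1)%Z).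
  { intro k. unfold inU. split; intro Hk.
    - destruct (Hedge (k + 1)%Z) as [H|H]; [exact H|].
      exfalso. apply (Hdisj (q (k, b2))). split; [apply Hk|rewrite qmap_glue; apply H].
    - destruct (Hedge k) as [H|H]; [exact H|].
      exfalso. apply (Hdisj (q (k, b2))). split; [rewrite qmap_glue; apply Hk|apply H]. }
  destruct (classic (inU 0%Z)) as [H0|H0].
  - right. intros y Vy. destruct (qmap_surj b1 b2 y) as [[k x] <-].
    apply (Hdisj (q (k, x))). split; [|exact Vy].
    exact (proj2 (Z_step_invariant inU Hstep k) H0 x).
  - left. intros y Uy. destruct (qmap_surj b1 b2 y) as [[k x] <-].
    destruct (Hedge k) as [H|H].
    + exact (H0 (proj1 (Z_step_invariant inU Hstep k) H)).
    + apply (Hdisj (q (k, x))). auto.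
Qed.

Lemma edges_compact (l : list Z) :
  compact_set (metric_open d) (fun _ => True) ->
  compact_set Y_open (fun y => exists i x, In i l /\ y = q (i, x)).
Proof.
  intro X_compact. induction l as [|i l IH]; intros Idx U HU Hcov.
  - exists nil. intros y [j [x [[] _]]].
  - destruct (X_compact Idx (fun t x => U t (q (i, x)))) as [li Hli].
    + intro t. exact (HU t i).
    + intros x _. apply Hcov. exists i, x. split; [left|]; reflexivity.
    + destruct (IH Idx U HU) as [lr Hlr].
      { intros y [j [x [Hj ->]]]. apply Hcov. exists j, x. split; [right|]; auto. }
      exists (li ++ lr). intros y [j [x [[<-|Hj] ->]]].
      * destruct (Hli x Logic.I) as [t [Ht Hut]].
        exists t. split; [apply in_or_app; left|]; assumption.
      * destruct (Hlr (q (j, x))) as [t [Ht Hut]]; [now exists j, x|].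
        exists t. split; [apply in_or_app; right|]; assumption.
Qed.

(* The point q (k, x) has the open neighbourhood of points strictly after the
   start of edge k - 1 and strictly before the end of edge k + 1, which lies
   in the compact union of the edges k - 1, k, k + 1. *)
Lemma Y_locally_compact :
  is_metric d -> compact_set (metric_open d) (fun _ => True) -> b1 <> b2 ->
  locally_compact Y_open.
Proof.
  intros d_metric X_compact Hb y. destruct (qmap_surj b1 b2 y) as [[k x] <-].
  exists (fun y => retract b1 b2 (k - 1) y <> b1 /\ retract b1 b2 (k + 1) y <> b2).
  exists (fun y => exists i x, In i ((k - 1) :: k :: (k + 1) :: nil)%Z /\ y = q (i, x)).
  split; [|split; [|split]].
  - intro i. apply open_and.
    + apply (retract_continuous (k - 1) (fun z => z <> b1)), open_neq, d_metric.
    + apply (retract_continuous (k + 1) (fun z => z <> b2)), open_neq, d_metric.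
  - rewrite retract_above, retract_below by lia. split; congruence.
  - intros y' [H1 H2]. destruct (canonical_form b1 b2 Hb y') as [i [w [Hw ->]]].
    exists i, w. split; [|reflexivity].
    destruct (Z_lt_dec i (k - 1)); [now rewrite retract_below in H1|].
    destruct (Z_lt_dec (k + 1) i); [now rewrite retract_above in H2|].
    simpl. lia.
  - now apply edges_compact.
Qed.

End QuotientTopology.

Section Classification.
Context {X : Type} (d : X -> X -> R) (b1 b2 : X).
Hypothesis d_metric : is_metric d.
Hypothesis X_connected : connected_space (metric_open d).
Hypothesis X_rigid : forall f : X -> X, continuous (metric_open d) (metric_open d) f ->
  (forall x, f x = x) \/ (exists c, forall x, f x = c).
Hypothesis b1_neq_b2 : b1 <> b2.
Local Notation q := (qmap b1 b2).
Local Notation r := (retract b1 b2).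

Definition maps_edge (h : Yq b1 b2 -> Yq b1 b2) (k j : Z) : Prop :=
  forall x, r j (h (q (k, x))) = x.

Lemma maps_edge_interior (h : Yq b1 b2 -> Yq b1 b2) (k j : Z) (x : X) :
  maps_edge h k j -> x <> b1 -> x <> b2 -> h (q (k, x)) = q (j, x).
Proof.
  intros Hh Hx1 Hx2. specialize (Hh x).
  destruct (canonical_form b1 b2 b1_neq_b2 (h (q (k, x)))) as [i [w [Hw E]]].
  rewrite E in Hh |- *.
  destruct (retract_canonical_cases b1 b2 i j w Hw) as [[_ E']|[[-> E']|[_ E']]];
    rewrite E' in Hh; congruence.
Qed.

(* By rigidity of R, a continuous injective self-map of Y maps each edge onto
   an edge: otherwise all coordinates r_j o h would be constant on the edge k,
   so h would identify its two distinct ends. *)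
Lemma maps_edge_exists (h : Yq b1 b2 -> Yq b1 b2) :
  continuous (Y_open d b1 b2) (Y_open d b1 b2) h ->
  (forall y y', h y = h y' -> y = y') -> forall k, exists j, maps_edge h k j.
Proof.
  intros Hcont Hinj k. apply NNPP. intro Hnone.
  assert (Hconst : forall j, exists c, forall x, r j (h (q (k, x))) = c).
  { intro j. destruct (X_rigid (fun x => r j (h (q (k, x))))) as [Hid|Hc].
    - apply (continuous_comp _ (Y_open d b1 b2)); [|apply retract_continuous].
      apply (continuous_comp _ (Y_open d b1 b2)); [apply edge_continuous|exact Hcont].
    - exfalso. apply Hnone. now exists j.
    - exact Hc. }
  assert (Hends : q (k, b1) = q (k, b2)).
  { apply Hinj, (retractions_separate b1 b2 b1_neq_b2). intro j.
    destruct (Hconst j) as [c Hc]. now rewrite !Hc. }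
  rewrite qmap_glue in Hends.
  apply (canonical_form_unique b1 b2 b1_neq_b2) in Hends; [lia|exact b1_neq_b2..].
Qed.

Lemma maps_edge_inverse (h g : Yq b1 b2 -> Yq b1 b2) (k j k' : Z) :
  (forall y, g (h y) = y) -> maps_edge h k j -> maps_edge g j k' -> k = k'.
Proof.
  intros Hgh Hh Hg.
  destruct (connected_third_point d b1 b2 d_metric X_connected b1_neq_b2) as [p [Hp1 Hp2]].
  assert (E := maps_edge_interior g j k' p Hg Hp1 Hp2).
  rewrite <- (maps_edge_interior h k j p Hh Hp1 Hp2), Hgh in E.
  now apply (canonical_form_unique b1 b2 b1_neq_b2) in E.
Qed.

Lemma maps_edge_junction (h : Yq b1 b2 -> Yq b1 b2) (k j1 j2 : Z) :
  maps_edge h (k - 1) j1 -> maps_edge h k j2 ->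
  exists i w, h (q (k, b1)) = q (i, w) /\ (j1 < i)%Z /\ ((i < j2)%Z \/ (i = j2 /\ w = b1)).
Proof.
  intros H1 H2. specialize (H1 b2). specialize (H2 b1).
  rewrite qmap_glue, Z.sub_add in H1.
  destruct (canonical_form b1 b2 b1_neq_b2 (h (q (k, b1)))) as [i [w [Hw E]]].
  exists i, w. split; [exact E|]. rewrite E in H1, H2.
  destruct (retract_canonical_cases b1 b2 i j1 w Hw) as [[_ E']|[[-> E']|[Hi E']]];
    rewrite E' in H1; [congruence|congruence|split; [exact Hi|]].
  destruct (retract_canonical_cases b1 b2 i j2 w Hw) as [[Hi' _]|[[-> E'']|[_ E'']]].
  - now left.
  - rewrite E'' in H2. now right.
  - rewrite E'' in H2. congruence.
Qed.

Lemma edge_index_exists (h : Yq b1 b2 -> Yq b1 b2) :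
  homeomorphism (Y_open d b1 b2) h ->
  exists s : Z -> Z, (forall k, maps_edge h k (s k)) /\ (forall k, (s k < s (k + 1))%Z).
Proof.
  intros [g [Hgh [_ [Hcont _]]]].
  assert (Hinj : forall y y', h y = h y' -> y = y').
  { intros y y' E. now rewrite <- (Hgh y), <- (Hgh y'), E. }
  assert (Hex := maps_edge_exists h Hcont Hinj).
  set (s := fun k => proj1_sig (constructive_indefinite_description _ (Hex k))).
  assert (Hs : forall k, maps_edge h k (s k)).
  { intro k. exact (proj2_sig (constructive_indefinite_description _ (Hex k))). }
  exists s. split; [exact Hs|]. intro k.
  assert (Hs0 : maps_edge h (k + 1 - 1) (s k)) by (rewrite Z.add_simpl_r; apply Hs).
  destruct (maps_edge_junction h (k + 1) _ _ Hs0 (Hs (k + 1)%Z)) as [i [w [_ [Hlt Hle]]]].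
  lia.
Qed.

Lemma edge_translation_is_shift (h : Yq b1 b2 -> Yq b1 b2) (m : Z) :
  (forall k, maps_edge h k (k + m)) -> forall y, h y = shift b1 b2 m y.
Proof.
  intros Hh y. destruct (canonical_form b1 b2 b1_neq_b2 y) as [i [w [Hw ->]]].
  rewrite shift_qmap. destruct (classic (w = b1)) as [->|Hw1].
  - destruct (maps_edge_junction h i _ _ (Hh (i - 1)%Z) (Hh i)) as [i' [w' [E [Hlt Hle]]]].
    rewrite E. destruct Hle as [Hle|[-> ->]]; [lia|]. f_equal. f_equal. lia.
  - rewrite (maps_edge_interior h i (i + m) w (Hh i) Hw1 Hw). f_equal. f_equal. lia.
Qed.

Lemma homeomorphism_is_shift (h : Yq b1 b2 -> Yq b1 b2) :
  homeomorphism (Y_open d b1 b2) h -> exists m, forall y, h y = shift b1 b2 m y.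
Proof.
  intro Hh. pose proof Hh as [g [Hgh [Hhg [Hhc Hgc]]]].
  assert (Hg : homeomorphism (Y_open d b1 b2) g) by now exists h.
  destruct (edge_index_exists h Hh) as [s [Hs Hs_incr]].
  destruct (edge_index_exists g Hg) as [t [Ht Ht_incr]].
  assert (Hts : forall k, t (s k) = k).
  { intro k. symmetry. exact (maps_edge_inverse h g k (s k) (t (s k)) Hgh (Hs k) (Ht (s k))). }
  exists (s 0%Z). apply edge_translation_is_shift. intro k.
  rewrite <- (Z_increasing_retraction_translation s t Hs_incr Ht_incr Hts k). apply Hs.
Qed.

End Classification.

Theorem mainTheorem3 (X : Type) (d : X -> X -> R) (b1 b2 : X) :
  deGroot_continuum d -> b1 <> b2 ->
  connected_space (Y_open d b1 b2) /\
  locally_compact (Y_open d b1 b2) /\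
  exists Phi : Z -> Yq b1 b2 -> Yq b1 b2,
    (forall (m k : Z) (x : X), Phi m (qmap b1 b2 (k, x)) = qmap b1 b2 ((m + k)%Z, x)) /\
    (forall m, homeomorphism (Y_open d b1 b2) (Phi m)) /\
    (forall m n y, Phi (m + n)%Z y = Phi m (Phi n y)) /\
    (forall m n, (forall y, Phi m y = Phi n y) -> m = n) /\
    (forall h, homeomorphism (Y_open d b1 b2) h -> exists m, forall y, h y = Phi m y).
Proof.
  intros [d_metric [X_compact [X_connected [_ X_rigid]]]] Hb.
  split; [exact (Y_connected d b1 b2 X_connected)|].
  split; [exact (Y_locally_compact d b1 b2 d_metric X_compact Hb)|].
  exists (shift b1 b2). repeat split.
  - apply shift_qmap.
  - apply shift_homeomorphism.
  - apply shift_add.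
  - exact (shift_injective b1 b2 Hb).
  - exact (homeomorphism_is_shift d b1 b2 d_metric X_connected X_rigid Hb).
Qed.
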